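(* Let $P \in S$ have degree $n$ in $x$, where $n$ is a prime number. Let $p_n$ be the leading coefficient of $P$ and $\rho = \deg_y(p_n)$, and let $s = \deg_y(\sigma(y))$. If $\sum_{i=0}^{n-1} s^i$ does not divide $\rho$, then $C_S(P) = K[P]$.
   Context: Standing conventions: $K$ is a field, $R = K[y]$, $\sigma$ is a $K$-algebra endomorphism of $R$ with $\deg_y(\sigma(y)) > 1$, and $\delta$ is a $K$-linear $\sigma$-derivation of $R$ ($\delta(ab) = \sigma(a)\delta(b) + \delta(a)b$). $S = R[x;\sigma,\delta]$ is the Ore extension (polynomials $\sum r_i x^i$, $r_i\in R$, with $xr = \sigma(r)x + \delta(r)$). Degree of an element of $S$ means degree in $x$; its leading coefficient is the coefficient in $K[y]$ of the highest power of $x$. $C_S(P)$ is the centralizer of $P$ in $S$, and $K[P] = \{\sum_i c_i P^i : c_i \in K\}$. *)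

From HB Require Import structures.
From mathcomp Require Import all_boot all_order all_algebra.
Set Implicit Arguments. Unset Strict Implicit. Unset Printing Implicit Defensive.
Import GRing.Theory.
Local Open Scope ring_scope.

(* The Ore extension S = R[x; sigma, delta] with R = K[y] = {poly K}.
   An element sum_i r_i x^i of S is represented by the polynomial
   f : {poly {poly K}} with f`_i = r_i (coefficient of x^i, written on the left).
   Only the additive structure of {poly {poly K}} is used; multiplication of S
   is the Ore product ore_mul defined below. *)

(* left multiplication by x:  x * (sum_k a_k x^k) = sum_k (sigma a_k x^{k+1} + delta a_k x^k) *)
Definition ore_mulx (K : fieldType) (sigma delta : {poly K} -> {poly K})
  (f : {poly {poly K}}) : {poly {poly K}} :=
  map_poly sigma f * 'X + map_poly delta f.

Definition ore_mul (K : fieldType) (sigma delta : {poly K} -> {poly K})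
  (f g : {poly {poly K}}) : {poly {poly K}} :=
  \sum_(0 <= i < size f) (f`_i)%:P * iter i (ore_mulx sigma delta) g.

Definition ore_pow (K : fieldType) (sigma delta : {poly K} -> {poly K})
  (P : {poly {poly K}}) (i : nat) : {poly {poly K}} :=
  iter i (ore_mul sigma delta P) 1.

Definition ore_centralizer (K : fieldType) (sigma delta : {poly K} -> {poly K})
  (P : {poly {poly K}}) : {poly {poly K}} -> Prop :=
  fun Q => ore_mul sigma delta P Q = ore_mul sigma delta Q P.

Definition ore_KP (K : fieldType) (sigma delta : {poly K} -> {poly K})
  (P : {poly {poly K}}) : {poly {poly K}} -> Prop :=
  fun Q => exists c : seq K,
    Q = \sum_(0 <= i < size c) (c`_i)%:P%:P * ore_pow sigma delta P i.

From HB Require Import structures.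
From mathcomp Require Import all_boot all_order all_algebra.
From mathcomp Require Import zify ring.
Import GRing.Theory.

Set Implicit Arguments.
Unset Strict Implicit.

(* Proposition 5.3: in S = K[y][x; sigma, delta] with s = deg_y sigma(y) >= 2, if
   deg_x P = n is prime and 1 + s + ... + s^(n-1) does not divide rho = deg_y p_n,
   then the centralizer of P is K[P].
   1. The Ore product is bilinear, associative and unital, and K is central; so
      K[P] lies in C(P), and C(P) is closed under products and K-combinations.
   2. Leading terms: if deg f = m and deg g = k then deg (f g) = m + k with leading
      coefficient f_m sigma^m(g_k), and deg_y sigma^j(b) = s^j deg_y b.
   3. If Q in C(P) has degree m and leading coefficient q, comparing leading terms of
      PQ = QP gives p_n sigma^n(q) = q sigma^m(p_n), hence the degree relation
      rho + d s^n = d + rho s^m  (d = deg_y q).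
   4. Then n | m: otherwise, n being prime, some power Q^a in C(P) has degree am with
      n | am + 1, and the relation read modulo s^n - 1 forces (sum s^i) | rho.
   5. Induction on deg Q: for m = kn, Q and P^k have the same degree and their leading
      coefficients u, v satisfy sigma^n(u) v = sigma^n(v) u, which forces v = c u with
      c in K; then Q - c P^k lies in C(P) and has smaller degree. *)

(* Step 4, arithmetic part: modulo T = s^n - 1 the relation gives rho = rho s^m, so
   rho s = rho s^(m+1) = rho; thus (s - 1)(sum s^i) = T divides rho (s - 1). *)
Lemma geom_sum_dvd_of_degree_relation (s n rho d m : nat) :
  1 < s -> 0 < n -> rho + d * s ^ n = d + rho * s ^ m -> n %| m.+1 ->
  \sum_(i < n) s ^ i %| rho.
Proof.
move=> s_gt1 n_gt0 rel /dvdnP[t m1E].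
set T := (s ^ n).-1.
have snE : s ^ n = T.+1 by rewrite prednK // expn_gt0 ltnW.
have sn1 : s ^ n = 1 %[mod T] by rewrite snE -add1n modnDr.
have sm1 : s ^ m.+1 = 1 %[mod T].
  by rewrite m1E mulnC expnM -modnXm sn1 modnXm exp1n.
have rho_sm : rho = rho * s ^ m %[mod T].
  apply/eqP; rewrite -(eqn_modDl d) addnC -rel snE.
  have -> : rho + d * T.+1 = d * T + (rho + d) by ring.
  by rewrite modnMDl.
have rho_s : rho * s = rho %[mod T].
  by rewrite -modnMml rho_sm modnMml -mulnA -expnSr -modnMmr sm1 modnMmr muln1.
move/eqP: rho_s; rewrite eqn_mod_dvd ?leq_pmulr ?(ltnW s_gt1) //.
rewrite /T predn_exp -[X in _ - X]muln1 -mulnBr subn1 mulnC dvdn_pmul2r //.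
by rewrite -ltnS prednK // ltnW.
Qed.

Lemma eq_of_twisted_sum (a b t : nat) : 1 < t -> a * t + b = b * t + a -> a = b.
Proof. by move=> t_gt1 E; nia. Qed.

Local Open Scope ring_scope.

Lemma size_gt_of_coef_neq0 (R : nzSemiRingType) (p : {poly R}) i :
  p`_i != 0 -> (i < size p)%N.
Proof. by apply: contraR; rewrite -leqNgt => /(nth_default 0) ->. Qed.

Lemma top_coef_neq0 (R : nzSemiRingType) (p : {poly R}) m :
  size p = m.+1 -> p`_m != 0.
Proof.
move=> sz; have : lead_coef p != 0 by rewrite lead_coef_eq0 -size_poly_eq0 sz.
by rewrite lead_coefE sz.
Qed.

Lemma size_of_top_coef (R : nzSemiRingType) (p : {poly R}) m :
  p`_m != 0 -> (forall j, (m < j)%N -> p`_j = 0) -> size p = m.+1.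
Proof.
move=> pm_neq0 high; apply/eqP; rewrite eqn_leq size_gt_of_coef_neq0 // andbT.
exact/leq_sizeP.
Qed.

Section OreExtension.
Variable K : fieldType.
Variable sigma : {rmorphism {poly K} -> {poly K}}.
Hypothesis sigmaK : forall c : K, sigma c%:P = c%:P.
Variable delta : {poly K} -> {poly K}.
Hypothesis delta_lin :
  forall (c : K) (a b : {poly K}), delta (c *: a + b) = c *: delta a + delta b.
Hypothesis delta_der :
  forall a b : {poly K}, delta (a * b) = sigma a * delta b + delta a * b.

Implicit Types (f g h P Q A B : {poly {poly K}}) (c d : {poly K}).
Local Notation mulx := (ore_mulx sigma delta).
Local Notation mul := (ore_mul sigma delta).

Lemma deltaD a b : delta (a + b) = delta a + delta b.
Proof. by have := delta_lin 1 a b; rewrite !scale1r. Qed.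

Lemma deltaB a b : delta (a - b) = delta a - delta b.
Proof. by have := delta_lin (-1) b a; rewrite !scaleN1r addrC => ->; rewrite addrC. Qed.

Lemma delta0 : delta 0 = 0.
Proof. by have := deltaB 0 0; rewrite !subrr. Qed.

Lemma delta1 : delta 1 = 0.
Proof.
have := delta_der 1 1; rewrite rmorph1 !mul1r mulr1 => twice.
by apply: (addrI (delta 1)); rewrite addr0 -twice.
Qed.

Lemma deltaC (c : K) : delta c%:P = 0.
Proof.
by rewrite -[c%:P]mulr1 mul_polyC -[c *: 1]addr0 delta_lin delta1 delta0 scaler0 addr0.
Qed.

Lemma coef_ore_mulx f i :
  (mulx f)`_i = (if i is j.+1 then sigma f`_j else 0) + delta f`_i.
Proof.
rewrite /ore_mulx coefD coefMX (coef_map_id0 _ _ delta0).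
by case: i => [|j] //=; rewrite coef_map.
Qed.

Lemma ore_mulxD f g : mulx (f + g) = mulx f + mulx g.
Proof.
apply/polyP => -[|j]; rewrite coefD !coef_ore_mulx !coefD deltaD ?add0r //.
by rewrite rmorphD addrACA.
Qed.

Lemma ore_mulxB f g : mulx (f - g) = mulx f - mulx g.
Proof.
apply/polyP => -[|j]; rewrite coefB !coef_ore_mulx !coefB deltaB ?add0r //.
by rewrite rmorphB opprD addrACA.
Qed.

Lemma ore_mulx0 : mulx 0 = 0.
Proof. by rewrite -{1}(subrr 0) ore_mulxB subrr. Qed.

Lemma ore_mulx_polyC (a : {poly K}) g :
  mulx (a%:P * g) = (sigma a)%:P * mulx g + (delta a)%:P * g.
Proof.
apply/polyP => -[|j]; rewrite [RHS]coefD !coefCM !coef_ore_mulx ?coefCM delta_der.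
  by rewrite !add0r.
by rewrite rmorphM mulrDr addrA.
Qed.

Lemma ore_mulx_scalar (c : K) g : mulx (c%:P%:P * g) = c%:P%:P * mulx g.
Proof. by rewrite ore_mulx_polyC sigmaK deltaC polyC0 mul0r addr0. Qed.

(* x 'X^i = 'X^(i+1), because delta kills the constant coefficient 1. *)
Lemma ore_mulxXn i : mulx 'X^i = 'X^(i.+1).
Proof.
rewrite /ore_mulx map_polyXn -exprSr.
have -> : map_poly delta 'X^i = 0; last by rewrite addr0.
apply/polyP => j; rewrite (coef_map_id0 _ _ delta0) coefXn coef0.
by case: (_ == _); rewrite ?delta0 ?delta1.
Qed.

Lemma iter_ore_mulx1 i : iter i mulx 1 = 'X^i.
Proof. by elim: i => [|i /= ->]; rewrite ?expr0 // ore_mulxXn. Qed.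

Lemma iter_ore_mulxD i f g : iter i mulx (f + g) = iter i mulx f + iter i mulx g.
Proof. by elim: i => //= i ->; rewrite ore_mulxD. Qed.

Lemma iter_ore_mulxB i f g : iter i mulx (f - g) = iter i mulx f - iter i mulx g.
Proof. by elim: i => //= i ->; rewrite ore_mulxB. Qed.

Lemma iter_ore_mulx_scalar i (c : K) g :
  iter i mulx (c%:P%:P * g) = c%:P%:P * iter i mulx g.
Proof. by elim: i => //= i ->; rewrite ore_mulx_scalar. Qed.

Lemma ore_mulE N f g : (size f <= N)%N ->
  mul f g = \sum_(0 <= i < N) (f`_i)%:P * iter i mulx g.
Proof.
move=> szf; rewrite /ore_mul (big_cat_nat (leq0n (size f)) szf) /=.
rewrite [X in _ = _ + X]big_nat_cond [X in _ = _ + X]big1 ?addr0 //.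
by move=> i /andP[/andP[le_fi _] _]; rewrite nth_default // mul0r.
Qed.

Lemma ore_mul0l h : mul 0 h = 0.
Proof. by rewrite /ore_mul size_poly0 big_geq. Qed.

Lemma ore_mulDl f g h : mul (f + g) h = mul f h + mul g h.
Proof.
rewrite !(ore_mulE (N := maxn (size f) (size g))) ?size_polyD ?leq_maxl ?leq_maxr //.
rewrite -big_split.
by apply: eq_bigr => i _; rewrite coefD polyCD mulrDl.
Qed.

Lemma ore_mulBl f g h : mul (f - g) h = mul f h - mul g h.
Proof. by apply/eqP; rewrite eq_sym subr_eq -ore_mulDl subrK. Qed.

Lemma ore_mulDr f g h : mul f (g + h) = mul f g + mul f h.
Proof.
by rewrite /ore_mul -big_split; apply: eq_bigr => i _; rewrite iter_ore_mulxD mulrDr.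
Qed.

Lemma ore_mulBr f g h : mul f (g - h) = mul f g - mul f h.
Proof.
by rewrite /ore_mul -sumrB; apply: eq_bigr => i _; rewrite iter_ore_mulxB mulrBr.
Qed.

Lemma ore_mul0r f : mul f 0 = 0.
Proof. by rewrite -{1}(subrr 0) ore_mulBr subrr. Qed.

Lemma ore_mul_polyCl (a : {poly K}) f h : mul (a%:P * f) h = a%:P * mul f h.
Proof.
have sz : (size (a%:P * f)%R <= size f)%N.
  by apply/leq_sizeP => j le_fj; rewrite coefCM nth_default ?mulr0.
rewrite (ore_mulE _ sz) /ore_mul mulr_sumr; apply: eq_bigr => i _.
by rewrite coefCM polyCM mulrA.
Qed.

Lemma ore_mul_scalarr f (c : K) g : mul f (c%:P%:P * g) = c%:P%:P * mul f g.
Proof.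
rewrite /ore_mul mulr_sumr; apply: eq_bigr => i _.
by rewrite iter_ore_mulx_scalar mulrCA.
Qed.

Lemma ore_mul_suml N (F : nat -> {poly {poly K}}) h :
  mul (\sum_(0 <= i < N) F i) h = \sum_(0 <= i < N) mul (F i) h.
Proof. exact: (big_morph _ (fun f g => ore_mulDl f g h) (ore_mul0l h)). Qed.

Lemma ore_mul_sumr N (F : nat -> {poly {poly K}}) f :
  mul f (\sum_(0 <= i < N) F i) = \sum_(0 <= i < N) mul f (F i).
Proof. exact: (big_morph _ (ore_mulDr f) (ore_mul0r f)). Qed.

Lemma ore_mul_mulxl g h : mul (mulx g) h = mulx (mul g h).
Proof.
set N := size g.
have sz : (size (mulx g) <= N.+1)%N.
  apply/leq_sizeP => j le_Nj; rewrite coef_ore_mulx !nth_default ?delta0 ?addr0 //.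
    by case: j le_Nj => // j le_Nj; rewrite nth_default ?rmorph0.
  exact: ltnW.
rewrite (ore_mulE _ sz) /ore_mul (big_morph mulx ore_mulxD ore_mulx0).
under [RHS]eq_bigr do rewrite ore_mulx_polyC.
under [LHS]eq_bigr do rewrite coef_ore_mulx polyCD mulrDl.
rewrite !big_split /= big_nat_recl // [X in _ + X = _]big_nat_recr //=.
by rewrite [g`_N]nth_default // delta0 polyC0 !mul0r add0r addr0.
Qed.

Lemma ore_mulA f g h : mul f (mul g h) = mul (mul f g) h.
Proof.
rewrite [mul f g]/ore_mul ore_mul_suml {1}/ore_mul; apply: eq_bigr => i _.
rewrite ore_mul_polyCl; congr (_ * _).
by elim: i => //= i ->; rewrite ore_mul_mulxl.
Qed.

Lemma ore_mul1l g : mul 1 g = g.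
Proof. by rewrite /ore_mul size_poly1 big_nat1 /= coef1 /= polyC1 mul1r. Qed.

Lemma ore_mul1r f : mul f 1 = f.
Proof.
rewrite /ore_mul -[RHS]coefK poly_def big_mkord; apply: eq_bigr => i _.
by rewrite iter_ore_mulx1 mul_polyC.
Qed.

Local Notation pw := (ore_pow sigma delta).

Lemma ore_comm_mul P A B : mul P A = mul A P -> mul P B = mul B P ->
  mul P (mul A B) = mul (mul A B) P.
Proof. by move=> PA PB; rewrite ore_mulA PA -ore_mulA PB ore_mulA. Qed.

Lemma ore_comm_pow P A k : mul P A = mul A P -> mul P (pw A k) = mul (pw A k) P.
Proof.
move=> PA; elim: k => [|k IH]; first by rewrite /ore_pow /= ore_mul1r ore_mul1l.
exact: ore_comm_mul.
Qed.

Definition ore_horner (c : {poly K}) (P : {poly {poly K}}) : {poly {poly K}} :=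
  \sum_(0 <= i < size c) (c`_i)%:P%:P * pw P i.

Lemma ore_hornerE N c P : (size c <= N)%N ->
  ore_horner c P = \sum_(0 <= i < N) (c`_i)%:P%:P * pw P i.
Proof.
move=> szc; rewrite /ore_horner (big_cat_nat (leq0n (size c)) szc) /=.
rewrite [X in _ = _ + X]big_nat_cond [X in _ = _ + X]big1 ?addr0 //.
by move=> i /andP[/andP[le_ci _] _]; rewrite nth_default // !polyC0 mul0r.
Qed.

Lemma ore_hornerD c d P : ore_horner (c + d) P = ore_horner c P + ore_horner d P.
Proof.
rewrite !(ore_hornerE (N := maxn (size c) (size d))) ?size_polyD ?leq_maxl ?leq_maxr //.
rewrite -big_split.
by apply: eq_bigr => i _; rewrite coefD !polyCD mulrDl.
Qed.

Lemma ore_horner_monomial (a : K) k P : ore_horner (a *: 'X^k) P = a%:P%:P * pw P k.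
Proof.
have sz : (size (a *: 'X^k) <= k.+1)%N.
  by rewrite (leq_trans (size_scale_leq _ _)) // size_polyXn.
rewrite (ore_hornerE _ sz) big_nat_recr //= coefZ coefXn eqxx mulr1.
rewrite big_nat_cond big1 ?add0r // => i /andP[/andP[_ lt_ik] _].
by rewrite coefZ coefXn ltn_eqF // mulr0 !polyC0 mul0r.
Qed.

Lemma ore_KP_horner P Q : ore_KP sigma delta P Q <-> exists c, Q = ore_horner c P.
Proof.
split=> -[c ->]; last by exists c.
exists (Poly c); rewrite (ore_hornerE _ (size_Poly c)).
by apply: eq_bigr => i _; rewrite coef_Poly.
Qed.

Lemma ore_horner_comm c P : mul P (ore_horner c P) = mul (ore_horner c P) P.
Proof.
rewrite ore_mul_sumr ore_mul_suml; apply: eq_bigr => i _.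
by rewrite ore_mul_scalarr (ore_mul_polyCl (c`_i)%:P) ore_comm_pow.
Qed.

Local Notation s := (size (sigma 'X)).-1.
Hypothesis s_gt1 : (1 < s)%N.

Lemma size_sigmaX_gt1 : (1 < size (sigma 'X))%N.
Proof. by move: s_gt1; case: (size _) => [|[|]]. Qed.

(* sigma is the substitution y := sigma(y), so it multiplies y-degrees by s. *)
Lemma sigma_comp b : sigma b = b \Po sigma 'X.
Proof.
elim/poly_ind: b => [|b c IH]; first by rewrite rmorph0 comp_poly0.
by rewrite rmorphD rmorphM /= IH sigmaK comp_polyD comp_polyM comp_polyX comp_polyC.
Qed.

Lemma size_sigma b : b != 0 -> size (sigma b) = ((size b).-1 * s).+1.
Proof.
move=> b_neq0; have sX := size_sigmaX_gt1.
have sX_neq0 : sigma 'X != 0 by rewrite -size_poly_eq0 -lt0n ltnW.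
rewrite sigma_comp -size_comp_poly prednK // size_poly_gt0 -lead_coef_eq0.
by rewrite lead_coef_comp // mulf_neq0 ?expf_neq0 ?lead_coef_eq0.
Qed.

Lemma iter_sigma_neq0 j b : b != 0 -> iter j sigma b != 0.
Proof.
by move=> b_neq0; elim: j => //= j IH; rewrite -size_poly_eq0 size_sigma.
Qed.

Lemma size_iter_sigma j b : b != 0 ->
  size (iter j sigma b) = ((size b).-1 * s ^ j).+1.
Proof.
move=> b_neq0; elim: j => [|j IH]; first by rewrite muln1 prednK // size_poly_gt0.
by rewrite /= size_sigma ?iter_sigma_neq0 // IH /= expnS mulnCA mulnC.
Qed.

Lemma size_mul_iter_sigma j (u v : {poly K}) : u != 0 -> v != 0 ->
  (size (u * iter j sigma v)).-1 = ((size u).-1 + (size v).-1 * s ^ j)%N.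
Proof.
move=> u_neq0 v_neq0; rewrite size_mul ?iter_sigma_neq0 // size_iter_sigma //.
have su : (0 < size u)%N by rewrite size_poly_gt0.
by rewrite addnS -{1}(prednK su) addSn.
Qed.

Lemma size_ore_mulx g k : size g = k.+1 ->
  size (mulx g) = k.+2 /\ (mulx g)`_k.+1 = sigma g`_k.
Proof.
move=> szg.
have top : (mulx g)`_k.+1 = sigma g`_k.
  by rewrite coef_ore_mulx [g`_k.+1]nth_default ?szg // delta0 addr0.
split=> //; apply: size_of_top_coef.
  by rewrite top -size_poly_eq0 size_sigma ?top_coef_neq0.
move=> [|j] // lt_kj; rewrite coef_ore_mulx !nth_default ?szg ?rmorph0 ?delta0 ?addr0 //.
exact: ltnW.
Qed.

Lemma size_iter_ore_mulx i g k : size g = k.+1 ->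
  size (iter i mulx g) = (k + i).+1 /\ (iter i mulx g)`_(k + i) = iter i sigma g`_k.
Proof.
move=> szg; elim: i => [|i [IHsize IHtop]]; first by rewrite addn0.
have [sz top] := size_ore_mulx IHsize.
by rewrite /= addnS sz top IHtop.
Qed.

Lemma coef_ore_mul_high f g m k j : size f = m.+1 -> size g = k.+1 ->
  (m + k <= j)%N -> (mul f g)`_j = f`_m * (iter m mulx g)`_j.
Proof.
move=> szf szg le_j; rewrite /ore_mul szf coef_sum big_nat_recr //= coefCM.
rewrite big_nat_cond big1 ?add0r // => i /andP[/andP[_ lt_im] _].
have [sz _] := size_iter_ore_mulx i szg.
rewrite coefCM [X in _ * X]nth_default ?mulr0 // sz.
by apply: leq_trans le_j; rewrite addnC ltn_add2r.
Qed.

Lemma size_ore_mul f g m k : size f = m.+1 -> size g = k.+1 ->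
  size (mul f g) = (m + k).+1 /\ (mul f g)`_(m + k) = f`_m * iter m sigma g`_k.
Proof.
move=> szf szg; have [sz top] := size_iter_ore_mulx m szg.
have topM : (mul f g)`_(m + k) = f`_m * iter m sigma g`_k.
  by rewrite (coef_ore_mul_high szf szg) // addnC top.
split=> //; apply: size_of_top_coef.
  by rewrite topM mulf_neq0 ?iter_sigma_neq0 ?top_coef_neq0.
move=> j lt_j; rewrite (coef_ore_mul_high szf szg (ltnW lt_j)).
by rewrite [X in _ * X]nth_default ?mulr0 // sz addnC.
Qed.

Lemma size_ore_pow A m k : size A = m.+1 -> size (pw A k) = (k * m).+1.
Proof.
move=> szA; elim: k => [|k IH]; first by rewrite /ore_pow /= size_poly1.
by have [sz _] := size_ore_mul szA IH; rewrite /ore_pow /= -/(pw A k) sz mulSn.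
Qed.

Lemma iter_sigma_linear j (c : K) (a b : {poly K}) :
  iter j sigma (c%:P * a - b) = c%:P * iter j sigma a - iter j sigma b.
Proof. by elim: j => //= j ->; rewrite rmorphB rmorphM sigmaK. Qed.

(* A twisted relation sigma^j(u) v = sigma^j(v) u with j > 0 forces equal y-degrees:
   deg u + s^j deg v = deg v + s^j deg u with s^j > 1. *)
Lemma twisted_eq_size j (u v : {poly K}) : (0 < j)%N -> u != 0 -> v != 0 ->
  iter j sigma u * v = iter j sigma v * u -> size u = size v.
Proof.
move=> j_gt0 u_neq0 v_neq0 uv.
have sj_gt1 : (1 < s ^ j)%N.
  by apply: leq_trans s_gt1 _; rewrite -{1}(expn1 s) leq_pexp2l // ltnW.
have := congr1 (fun p : {poly K} => (size p).-1) uv.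
rewrite /= mulrC [_ * u]mulrC !size_mul_iter_sigma // => deg_rel.
have /eq_of_twisted_sum eq_deg : ((size u).-1 * s ^ j + (size v).-1 =
    (size v).-1 * s ^ j + (size u).-1)%N by rewrite addnC deg_rel addnC.
have [su sv] : (0 < size u)%N /\ (0 < size v)%N by rewrite !size_poly_gt0.
by rewrite -(prednK su) -(prednK sv) (eq_deg sj_gt1).
Qed.

(* Moreover v is then a K-multiple of u: subtracting the multiple of u that kills the
   leading coefficient of v preserves the relation, so the difference must vanish. *)
Lemma twisted_eq_scalar j (u v : {poly K}) : (0 < j)%N -> u != 0 -> v != 0 ->
  iter j sigma u * v = iter j sigma v * u -> exists c : K, v = c%:P * u.
Proof.
move=> j_gt0 u_neq0 v_neq0 uv; have szuv := twisted_eq_size j_gt0 u_neq0 v_neq0 uv.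
case szu : (size u) => [|d].
  by move/eqP: szu; rewrite size_poly_eq0 (negbTE u_neq0).
have ud_neq0 : u`_d != 0 by apply: top_coef_neq0.
exists (v`_d / u`_d); apply/eqP; rewrite eq_sym -subr_eq0; apply/eqP.
set w := _ - v.
have szw : (size w <= d)%N.
  apply/leq_sizeP => i; rewrite leq_eqVlt => /orP[/eqP <-|lt_di].
    by rewrite /w coefB coefCM divfK // subrr.
  have [ui0 vi0] : u`_i = 0 /\ v`_i = 0 by split; rewrite nth_default // -?szuv szu.
  by rewrite /w coefB coefCM ui0 vi0 mulr0 subr0.
apply/eqP; apply: contraLR szw => w_neq0; rewrite -ltnNge.
have uw : iter j sigma u * w = iter j sigma w * u.
  by rewrite /w iter_sigma_linear mulrBr mulrBl uv; congr (_ - _); ring.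
by rewrite -(twisted_eq_size j_gt0 u_neq0 w_neq0 uw) szu.
Qed.

Lemma commute_top_coef P Q n m : size P = n.+1 -> size Q = m.+1 ->
  mul P Q = mul Q P -> P`_n * iter n sigma Q`_m = Q`_m * iter m sigma P`_n.
Proof.
move=> szP szQ PQ; have [_ topPQ] := size_ore_mul szP szQ.
by have [_ topQP] := size_ore_mul szQ szP; rewrite -topPQ -topQP addnC PQ.
Qed.

Lemma commute_degree_relation P Q n m : size P = n.+1 -> size Q = m.+1 ->
  mul P Q = mul Q P ->
  ((size (lead_coef P)).-1 + (size (lead_coef Q)).-1 * s ^ n =
   (size (lead_coef Q)).-1 + (size (lead_coef P)).-1 * s ^ m)%N.
Proof.
move=> szP szQ PQ; rewrite !lead_coefE szP szQ /=.
have := congr1 (fun p : {poly K} => (size p).-1) (commute_top_coef szP szQ PQ).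
by rewrite /= !size_mul_iter_sigma ?top_coef_neq0.
Qed.

Section Centralizer.
Variables (P : {poly {poly K}}) (n : nat).
Hypothesis n_prime : prime n.
Hypothesis P_deg : size P = n.+1.
Hypothesis rho_not_dvd : ~~ (\sum_(i < n) s ^ i %| (size (lead_coef P)).-1)%N.

(* Step 4: the degree m of an element Q of C(P) is a multiple of n; otherwise some
   power Q^a, of degree a m with n | a m + 1, contradicts rho_not_dvd. *)
Lemma centralizer_deg_dvd Q m : size Q = m.+1 -> mul P Q = mul Q P -> (n %| m)%N.
Proof.
move=> szQ PQ; case: (boolP (n %| m)%N) => // n_ndvd_m; case/negP: rho_not_dvd.
have n_gt0 := prime_gt0 n_prime.
have [a _] := Bezoutl m n_gt0; rewrite (eqP (_ : coprime n m)) ?prime_coprime //.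
move=> n_dvd_am1; have szQa := size_ore_pow a szQ.
have rel := commute_degree_relation P_deg szQa (ore_comm_pow a PQ).
by apply: (geom_sum_dvd_of_degree_relation s_gt1 n_gt0 rel); rewrite -add1n.
Qed.

Lemma centralizer_top_term Q N : size Q = N.+1 -> mul P Q = mul Q P ->
  exists (c : K) (k : nat), (size (Q - c%:P%:P * pw P k)%R <= N)%N.
Proof.
move=> szQ PQ; have /divnK Nk := centralizer_deg_dvd szQ PQ.
set k := (N %/ n)%N in Nk.
have szPk : size (pw P k) = N.+1 by rewrite (size_ore_pow k P_deg) Nk.
have PPk := ore_comm_pow k (erefl (mul P P)).
have twisted : iter n sigma (pw P k)`_N * Q`_N = iter n sigma Q`_N * (pw P k)`_N.
  apply: (mulfI (top_coef_neq0 P_deg)); rewrite !mulrA.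
  by rewrite (commute_top_coef P_deg szQ PQ) (commute_top_coef P_deg szPk PPk); ring.
have [c Qtop] := twisted_eq_scalar (prime_gt0 n_prime) (top_coef_neq0 szPk)
  (top_coef_neq0 szQ) twisted.
exists c, k; apply/leq_sizeP => j; rewrite leq_eqVlt => /orP[/eqP <-|lt_Nj].
  by rewrite coefB coefCM Qtop subrr.
by rewrite coefB coefCM !nth_default ?mulr0 ?subr0 ?szQ ?szPk.
Qed.

Lemma centralizer_horner Q : mul P Q = mul Q P -> exists c, Q = ore_horner c P.
Proof.
elim: {Q}(size Q) {-2}Q (leqnn (size Q)) => [|N IH] Q szQ PQ.
  exists 0; rewrite /ore_horner size_poly0 big_geq //.
  by apply/eqP; rewrite -size_poly_eq0 -leqn0.
case: (ltnP (size Q) N.+1) => [lt_QN|le_NQ]; first exact: IH lt_QN PQ.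
have {le_NQ}szQ : size Q = N.+1 by apply/eqP; rewrite eqn_leq szQ le_NQ.
have [a [k szR]] := centralizer_top_term szQ PQ.
have PR : mul P (Q - a%:P%:P * pw P k) = mul (Q - a%:P%:P * pw P k) P.
  by rewrite ore_mulBr ore_mulBl ore_mul_scalarr ore_mul_polyCl PQ ore_comm_pow.
have [r Rr] := IH _ szR PR.
by exists (r + a *: 'X^k); rewrite ore_hornerD ore_horner_monomial -Rr subrK.
Qed.

End Centralizer.
End OreExtension.

Unset Implicit Arguments.

Theorem proposition5p3 (K : fieldType)
  (sigma : {rmorphism {poly K} -> {poly K}})
  (sigmaK : forall c : K, sigma c%:P = c%:P)
  (sigma_deg : (2 < size (sigma 'X))%N)
  (delta : {poly K} -> {poly K})
  (delta_lin : forall (c : K) (a b : {poly K}), delta (c *: a + b) = c *: delta a + delta b)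
  (delta_der : forall a b : {poly K}, delta (a * b) = sigma a * delta b + delta a * b)
  (P : {poly {poly K}}) (n : nat)
  (n_prime : prime n)
  (P_deg : size P = n.+1) :
  let rho := (size (lead_coef P)).-1 in
  let s := (size (sigma 'X)).-1 in
  ~~ ((\sum_(i < n) s ^ i)%N %| rho)%N ->
  forall Q : {poly {poly K}},
    ore_centralizer sigma delta P Q <-> ore_KP sigma delta P Q.
Proof.
move=> rho s rho_not_dvd Q; rewrite /ore_centralizer ore_KP_horner.
have s_gt1 : (1 < s)%N by move: sigma_deg; rewrite /s; case: (size _) => [|[|]].
split; first exact: (centralizer_horner sigmaK delta_lin delta_der s_gt1 n_prime P_deg
  rho_not_dvd).
by case=> c ->; apply: (ore_horner_comm sigmaK delta_lin delta_der).
Qed.
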